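(* Let $\mathcal S=(s_\alpha)_{\alpha\in L(\omega_1)}$ be a ladder system on $\omega_1$, let $K=K_{\mathcal S}$ be the associated ladder system space, and let $\phi:K\to K$ be any map whose restriction to $S(\omega_1)$ is an injection into $L(\omega_1)$ and which maps every element of $L(\omega_1)\cup\{\infty\}$ to $\infty$ (such a $\phi$ is continuous). Let $T=C_\phi:C(K)\to C(K)$, $f\mapsto f\circ\phi$. Then $T$ satisfies neither of the following conditions: (b) there exists $g\in\mathfrak B(K)$ such that $T^*+M_g^*:C(K)^*\to C(K)^*$ has separable range; (c) there exists $g\in\mathfrak B(K)$ such that the restriction of $(T^*+M_g^* )^*:C(K)^{**}\to C(K)^{**}$ to $C(K)$ (canonically embedded in $C(K)^{**}$) has separable range. In particular, there exists a bounded operator on $C(K_{\mathcal S})$ satisfying neither (b) nor (c).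
   Context: $L(\omega_1)$ denotes the set of limit ordinals in $\omega_1$ (the first uncountable ordinal) and $S(\omega_1)=\omega_1\setminus L(\omega_1)$. A ladder system on $\omega_1$ is a family $\mathcal S=(s_\alpha)_{\alpha\in L(\omega_1)}$ where for each limit $\alpha$, $s_\alpha=\{s^n_\alpha:n\in\omega\}$ and $(s^n_\alpha)_{n\in\omega}$ is a strictly increasing sequence in $S(\omega_1)$ converging (in the order sense) to $\alpha$. The ladder system topology $\tau_{\mathcal S}$ on $\omega_1$ is the topology in which every element of $S(\omega_1)$ is isolated and the basic neighborhoods of a limit ordinal $\alpha$ are the sets $\{\alpha\}\cup B$ with $B$ a cofinite subset of $s_\alpha$. This is a locally compact Hausdorff space, and $K_{\mathcal S}=\omega_1\cup\{\infty\}$ is its one-point compactification. $C(K)$ is the Banach space of continuous real-valued functions on $K$ with the sup norm; $C(K)^*$ is identified with the space of finite regular signed Borel measures on $K$. $\mathfrak B(K)$ is the space of bounded real-valued Borel functions on $K$. For $g\in\mathfrak B(K)$, $M_g^*:C(K)^*\to C(K)^*$ sends a measure $\mu$ to $g\,\mathrm d\mu$. Stars denote Banach space adjoints. *)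

From HB Require Import structures.
From mathcomp Require Import all_boot all_order all_algebra.
From mathcomp Require Import all_classical all_reals all_analysis.
Set Implicit Arguments. Unset Strict Implicit. Unset Printing Implicit Defensive.
Import Order.TTheory GRing.Theory Num.Theory.
Import numFieldNormedType.Exports.
Local Open Scope classical_set_scope.
Local Open Scope ring_scope.

Section Ordinals.
Context {d : Order.disp_t} {W : orderType d}.

Definition is_omega1 : Prop :=
  [/\ (forall A : set W, A !=set0 -> exists2 a, A a & forall b, A b -> (a <= b)%O),
      ~ countable [set: W] &
      forall a : W, countable [set b | (b < a)%O]].

Definition is_limit (a : W) : Prop :=
  (exists b, (b < a)%O) /\ forall b, (b < a)%O -> exists c, (b < c)%O /\ (c < a)%O.

Definition ladder_system (s : W -> nat -> W) : Prop :=
  forall a, is_limit a ->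
  [/\ forall n, (s a n < s a n.+1)%O,
      forall n, ~ is_limit (s a n),
      forall n, (s a n < a)%O &
      forall b, (b < a)%O -> exists n, (b < s a n)%O].

Definition ladder_open (s : W -> nat -> W) (U : set W) : Prop :=
  forall a, is_limit a -> U a -> exists N, forall n, (N <= n)%N -> U (s a n).

Definition ladder_space (s : W -> nat -> W) : Type := W.

Variable s : W -> nat -> W.

HB.instance Definition _ := Choice.on (ladder_space s).

Lemma ladder_openT : ladder_open s setT.
Proof. by move=> a _ _; exists 0%N. Qed.

Lemma ladder_openI : setI_closed (ladder_open s).
Proof.
move=> U V oU oV a la [Ua Va].
have [N1 H1] := oU a la Ua; have [N2 H2] := oV a la Va.
exists (maxn N1 N2) => n Hn; split.
  by apply: H1; apply: leq_trans Hn; rewrite leq_maxl.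
by apply: H2; apply: leq_trans Hn; rewrite leq_maxr.
Qed.

Lemma ladder_open_bigU (I : Type) (f : I -> set W) :
  (forall i, ladder_open s (f i)) -> ladder_open s (\bigcup_i f i).
Proof.
move=> hf a la [i _ fia]; have [N HN] := hf i a la fia.
by exists N => n Hn; exists i => //; apply: HN.
Qed.

HB.instance Definition _ := isOpenTopological.Build (ladder_space s)
  ladder_openT ladder_openI ladder_open_bigU.

End Ordinals.

(** K_S = omega_1 U {oo} (None = oo), one-point compactification of (omega_1, tau_S) *)
Notation ladder_K s := (one_point_compactification (ladder_space s)).

Definition borel (T : topologicalType) := g_sigma_algebraType (@open T).


Section Banach.
Context {R : realType} {d : Order.disp_t} {W : orderType d} {s : W -> nat -> W}.
Local Notation T := (ladder_K s).

Definition sup_le1 (f : T -> R) : Prop := forall x, `|f x| <= 1.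

Definition bounded_borel (g : T -> R) : Prop :=
  @measurable_fun _ _ (borel T) R setT g /\ exists M : R, forall x, `|g x| <= M.

Definition regular_measure (mu : {finite_measure set borel T -> \bar R}) : Prop :=
  forall A : set (borel T), measurable A ->
    mu A = ereal_sup [set mu C | C in [set C : set (borel T) | @compact T C /\ C `<=` A]]
    /\ mu A = ereal_inf [set mu U | U in [set U : set (borel T) | @open T U /\ A `<=` U]].

(** A finite regular signed Borel measure is represented as mu1 - mu2 with
    mu1, mu2 finite regular (positive) Borel measures; integral of a bounded
    Borel function h against it. *)
Definition sintegral (mu1 mu2 : {finite_measure set borel T -> \bar R})
  (h : T -> R) : R :=
  Rintegral mu1 setT (h : borel T -> R) - Rintegral mu2 setT (h : borel T -> R).

(** The functional on C(T) given by (T^* + M_g^* ) mu, where T = C_phi and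
    mu = mu1 - mu2:  f |-> <mu, f o phi> + <g dmu, f>. *)
Definition adjsum_apply (phi : T -> T) (g : T -> R)
  (mu1 mu2 : {finite_measure set borel T -> \bar R}) (f : T -> R) : R :=
  sintegral mu1 mu2 (f \o phi) + sintegral mu1 mu2 (fun x => g x * f x).

Definition adjsum_range (phi : T -> T) (g : T -> R) : set ((T -> R) -> R) :=
  [set Psi | exists mu1 mu2, [/\ regular_measure mu1, regular_measure mu2 &
     Psi = adjsum_apply phi g mu1 mu2]].

Definition dual_dist_le (Psi1 Psi2 : (T -> R) -> R) (e : R) : Prop :=
  forall f : T -> R, continuous f -> sup_le1 f -> `|Psi1 f - Psi2 f| <= e.

Definition cond_b (phi : T -> T) (g : T -> R) : Prop :=
  exists D : set ((T -> R) -> R),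
    [/\ countable D, D `<=` adjsum_range phi g &
        forall Psi, adjsum_range phi g Psi -> forall e : R, 0 < e ->
          exists2 Psi', D Psi' & dual_dist_le Psi Psi' e].

(** ||(T^*+M_g^* )^* f1 - (T^*+M_g^* )^* f2||_{C(T)^{**}} <= e, for f1, f2 in C(T)
    embedded canonically in C(T)^{**}; the sup runs over the unit ball of
    C(T)^{*} (regular signed measures of dual norm <= 1). *)
Definition bidual_dist_le (phi : T -> T) (g : T -> R) (f1 f2 : T -> R) (e : R) : Prop :=
  forall mu1 mu2 : {finite_measure set borel T -> \bar R},
    regular_measure mu1 -> regular_measure mu2 ->
    (forall h : T -> R, continuous h -> sup_le1 h -> `|sintegral mu1 mu2 h| <= 1) ->
    `|adjsum_apply phi g mu1 mu2 f1 - adjsum_apply phi g mu1 mu2 f2| <= e.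

Definition cond_c (phi : T -> T) (g : T -> R) : Prop :=
  exists D : set (T -> R),
    [/\ countable D, (forall f : T -> R, D f -> continuous f) &
        forall f : T -> R, continuous f -> forall e : R, 0 < e ->
          exists2 f', D f' & bidual_dist_le phi g f f' e].

End Banach.

Definition phi_cond {d : Order.disp_t} {W : orderType d} (s : W -> nat -> W)
  (phi : ladder_K s -> ladder_K s) : Prop :=
  [/\ (forall a, ~ is_limit a -> exists2 b, is_limit b & phi (Some a) = Some b),
      (forall a b, ~ is_limit a -> ~ is_limit b -> phi (Some a) = phi (Some b) -> a = b),
      (forall a, is_limit a -> phi (Some a) = None) &
      phi None = None].

From Pilot Require Import Defs.
From HB Require Import structures.
From mathcomp Require Import all_boot all_order all_algebra.
From mathcomp Require Import all_classical all_reals all_analysis.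
From mathcomp Require Import finmap lra.
Import Order.TTheory GRing.Theory Num.Theory.
Import numFieldNormedType.Exports.
Local Open Scope classical_set_scope.
Local Open Scope ring_scope.

(* A non-limit [a] is sent by [phi] to a limit [G a].  The indicator [f a] of a
   clopen compact tail of the ladder at [G a], chosen on the same side of [a] as
   [G a], satisfies <(T^* + M_g^* ) delta_a, f a> = 1, because [a] is not in the
   tail; and for [a <> c] with [G a], [G c] on the same side of [a], [c], one of
   <(T^* + M_g^* ) delta_c, f a> and <(T^* + M_g^* ) delta_a, f c> vanishes, since
   [a] and [c] cannot lie in each other's tails.  Uncountably many non-limits
   lie on one side, giving uncountably many functionals [(T^* + M_g^* ) delta_a]
   (and uncountably many images of the [f a]) at mutual distance at least 1, so
   no countable set approximates all of them within 1/3. *)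

Lemma countable_setU {T : Type} {A B : set T} :
  countable A -> countable B -> countable (A `|` B).
Proof.
move=> cA cB.
have -> : A `|` B = \bigcup_(i in [set: bool]) (if i then A else B).
  apply/seteqP; split=> x; first by case=> ?; [exists true | exists false].
  by case=> -[] _ ?; [left | right].
by apply: bigcup_countable => // -[].
Qed.

Section Omega1.
Context {d : Order.disp_t} {W : orderType d}.
Hypothesis omega1W : is_omega1 (W:=W).
Local Open Scope order_scope.

Lemma omega1_min (A : set W) : A !=set0 -> exists2 a, A a & forall b, A b -> a <= b.
Proof. by case: omega1W => + _ _; apply. Qed.

Lemma omega1_uncountable : ~ countable [set: W].
Proof. by case: omega1W. Qed.

Lemma countable_lt (a : W) : countable [set b | b < a].
Proof. by case: omega1W => _ _; apply. Qed.

Lemma countable_le (a : W) : countable [set b | b <= a].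
Proof.
have -> : [set b | b <= a] = [set b | b < a] `|` [set a].
  apply/seteqP; split=> x /=; first by rewrite le_eqVlt => /orP[/eqP->|]; [right | left].
  by case=> [/ltW | ->].
exact: countable_setU (countable_lt a) (countable1 a).
Qed.

Lemma countable_bounded (A : set W) : countable A -> exists c, forall x, A x -> x < c.
Proof.
move=> cA.
have [c Nc] : exists c, ~ (\bigcup_(x in A) [set b | b <= x]) c.
  apply: contrapT => /forallNP below; apply: omega1_uncountable.
  apply: sub_countable (bigcup_countable cA (fun x _ => countable_le x)).
  by apply: subset_card_le => x _; apply: contrapT; apply: below.
by exists c => x Ax; rewrite ltNge; apply/negP => cx; apply: Nc; exists x.
Qed.

Lemma exists_succ (a : W) : exists b, a < b /\ forall c, a < c -> b <= c.
Proof.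
have [b ab] : exists b, a < b.
  by have [b Hb] := countable_bounded _ (countable1 a); exists b; apply: Hb.
by have [m Am Hm] := @omega1_min [set c | a < c] (ex_intro _ b ab); exists m.
Qed.

Lemma succ_not_limit (a b : W) : a < b -> (forall c, a < c -> b <= c) -> ~ is_limit b.
Proof.
move=> ab Hb [_ /(_ a ab) [c [ac cb]]].
by have := Hb c ac; rewrite leNgt cb.
Qed.

Lemma nonlimit_uncountable : ~ countable [set a : W | ~ is_limit a].
Proof.
move=> /countable_injP [j jinj]; apply: omega1_uncountable.
have [succ Hsucc] := choice exists_succ.
have succ_nl x : ~ is_limit (succ x) by case: (Hsucc x); apply: succ_not_limit.
apply/countable_injP; exists (j \o succ) => x y _ _ /= jxy.
have E : succ x = succ y by apply: jinj => //; rewrite in_setE; apply: succ_nl.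
apply/eqP; rewrite eq_le !leNgt; apply/andP; split; apply/negP => H.
- by have := (Hsucc y).2 _ H; rewrite -E leNgt (Hsucc x).1.
- by have := (Hsucc x).2 _ H; rewrite E leNgt (Hsucc y).1.
Qed.

(* The supremum of the omega-sequence of successors of [a]. *)
Lemma exists_limit_above (a : W) : exists2 m, a < m & is_limit m.
Proof.
have [succ Hsucc] := choice exists_succ.
pose u := fix u n := if n is n'.+1 then succ (u n') else a.
have cu : countable (range u) by apply: sub_countable (card_image_le _ _) _.
have [c Hc] := countable_bounded _ cu.
have [m Am Hm] := @omega1_min [set m | forall x, range u x -> x < m] (ex_intro _ c Hc).
have am : a < m by apply: Am; exists 0%N.
exists m => //; split; first by exists a.
move=> b bm; have : ~ (forall x, range u x -> x < b).
  by move=> H; have := Hm _ H; rewrite leNgt bm.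
move=> /existsNP [x /not_implyP [[n _ <-]]] /negP; rewrite -leNgt => bun.
exists (u n.+1); split; first exact: le_lt_trans bun (Hsucc (u n)).1.
by apply: Am; exists n.+1.
Qed.

Lemma limit_uncountable : ~ countable [set a : W | is_limit a].
Proof.
move=> /countable_bounded [c Hc]; have [m cm lm] := exists_limit_above c.
by have := Hc _ lm; rewrite ltNge (ltW cm).
Qed.

Lemma omega1_wf : well_founded (fun x y : W => x < y).
Proof.
move=> a; apply: contrapT => na.
have [m Am Hm] := @omega1_min [set x | ~ Acc (fun x y : W => x < y) x] (ex_intro _ a na).
apply: Am; constructor => y ym; apply: contrapT => ny.
by have := Hm _ ny; rewrite leNgt ym.
Qed.

(* Transfinite recursion: [e a] is a limit avoiding all [e b], [b < a]; it
   exists because only countably many limits are excluded. *)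
Lemma exists_inj_limit : exists e : W -> W, (forall a, is_limit (e a)) /\ injective e.
Proof.
pose P (a : W) (rec : forall b, b < a -> W) (l : W) :=
  is_limit l /\ forall b (h : b < a), l <> rec b h.
have Pex a rec : exists l, P a rec l.
  apply: contrapT => /forallNP H; apply: limit_uncountable.
  pose r b := if pselect (b < a) is left h then rec b h else a.
  apply: sub_countable (countable_lt a); apply: card_le_trans (card_image_le r _).
  apply: subset_card_le => l ll.
  have /not_andP [//|/existsNP [b /existsNP [h /contrapT E]]] := H l.
  exists b => //; rewrite /r; case: pselect => // h'.
  by rewrite E (Prop_irrelevance h h').
pose F a rec := projT1 (cid (Pex a rec)).
have FP a rec : P a rec (F a rec) := projT2 (cid (Pex a rec)).
pose e := Fix omega1_wf (fun _ => W) F.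
have eE a : e a = F a (fun b _ => e b).
  rewrite /e Fix_eq // => x f g fg; rewrite /F.
  suff -> : f = g by [].
  by apply: functional_extensionality_dep => y; apply: functional_extensionality_dep.
exists e; split; first by move=> a; rewrite eE; exact: (FP _ _).1.
move=> x y exy; apply/eqP; rewrite eq_le !leNgt; apply/andP; split; apply/negP => H.
- by have := (FP x (fun b _ => e b)).2 y H; rewrite -eE exy.
- by have := (FP y (fun b _ => e b)).2 x H; rewrite -eE exy.
Qed.

End Omega1.

Lemma near_notin_finite {T : Type} {u : nat -> T} {A : set T} :
  injective u -> finite_set A -> \forall n \near \oo, ~ A (u n).
Proof.
move=> uinj fA.
have fB : finite_set (u @^-1` A) by apply: finite_preimage => // x y _ _; apply: uinj.
have : \forall n \near \oo, (\bigcap_(i in [set` fset_set (u @^-1` A)]) [set n | (i < n)%N]) n.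
  by apply: filter_bigI => i _; exact: nbhs_infty_gt.
apply: filterS => n Hn Aun.
have /Hn : [set` fset_set (u @^-1` A)] n by rewrite /= in_fset_set //; apply/mem_set.
by rewrite /= ltnn.
Qed.

Definition tail {d : Order.disp_t} {W : orderType d} (s : W -> nat -> W)
  (g : W) (N : nat) : set W :=
  [set x | x = g \/ exists2 n, (N <= n)%N & x = s g n].

Section LadderTopology.
Context {d : Order.disp_t} {W : orderType d} {s : W -> nat -> W}.
Hypothesis ladder_s : ladder_system s.
Local Notation X := (ladder_space s).
Local Open Scope order_scope.

Section Ladder.
Context {a : W} (la : is_limit a).

Lemma ladder_not_limit n : ~ is_limit (s a n).
Proof. by case: (ladder_s _ la). Qed.

Lemma ladder_lt n : s a n < a.
Proof. by case: (ladder_s _ la). Qed.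

Lemma ladder_cofinal {b} : b < a -> exists n, b < s a n.
Proof. by case: (ladder_s _ la) => _ _ _; apply. Qed.

Lemma ladder_ltn {n m} : (n < m)%N -> s a n < s a m.
Proof.
have inc k : s a k < s a k.+1 by case: (ladder_s _ la).
elim: m => // m IH; rewrite ltnS leq_eqVlt => /orP[/eqP-> // | /IH h].
exact: lt_trans h (inc m).
Qed.

Lemma ladder_leq {n m} : (n <= m)%N -> s a n <= s a m.
Proof. by rewrite leq_eqVlt => /orP[/eqP-> // | /ladder_ltn/ltW]. Qed.

Lemma ladder_inj : injective (s a).
Proof.
move=> n m E; case: (ltngtP n m) => // /ladder_ltn; by rewrite E ltxx.
Qed.

Lemma near_ladder_gt {b} : b < a -> \forall n \near \oo, b < s a n.
Proof.
move=> /ladder_cofinal [N bN]; exists N => // n /= Nn.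
exact: lt_le_trans bN (ladder_leq Nn).
Qed.

End Ladder.

Lemma ladder_openP (U : set X) :
  open U <-> forall a, is_limit a -> U a -> \forall n \near \oo, U (s a n).
Proof.
split=> [oU | oU].
  have oU' : ladder_open s U := oU.
  by move=> a la /(oU' a la) [N HN]; exists N.
suff : ladder_open s U by [].
by move=> a la /(oU a la) [N _ HN]; exists N => n; apply: HN.
Qed.

Lemma ladder_closedP (C : set X) :
  (forall a, is_limit a -> ~ C a -> \forall n \near \oo, ~ C (s a n)) -> closed C.
Proof. by move=> H; rewrite -(setCK C); apply/open_closedC/ladder_openP. Qed.

Lemma open_nonlimit (p : X) : ~ is_limit p -> open [set p].
Proof. by move=> np; apply/ladder_openP => a la pa; rewrite pa in la. Qed.

Lemma closed_finite (C : set X) : finite_set C -> closed C.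
Proof.
move=> fC; apply: ladder_closedP => a la _.
exact: near_notin_finite (ladder_inj la) fC.
Qed.

Lemma tail_le {g N x} : is_limit g -> tail s g N x -> x <= g.
Proof. by move=> lg [-> // | [n _ ->]]; exact/ltW/ladder_lt. Qed.

Lemma tail_gt {g b} : is_limit g -> b < g -> exists N, forall x, tail s g N x -> b < x.
Proof.
move=> lg /(ladder_cofinal lg) [N bN]; exists N => x [-> | [n Nn ->]].
  exact: lt_trans bN (ladder_lt lg N).
exact: lt_le_trans bN (ladder_leq lg Nn).
Qed.

Lemma open_tail {g N} : is_limit g -> @open X (tail s g N).
Proof.
move=> lg; apply/ladder_openP => a la [-> | [n _ E]]; last first.
  by rewrite E in la; have := ladder_not_limit lg n.
by exists N => // n /= Nn; right; exists n.
Qed.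

Lemma closed_tail {g N} : is_limit g -> @closed X (tail s g N).
Proof.
move=> lg; apply: ladder_closedP => a la tNa.
have [ga | ag] := ltP g a.
  by move: (near_ladder_gt la ga); apply: filterS => n gn /(tail_le lg); rewrite leNgt gn.
have {ag} ag : a < g by rewrite lt_neqAle ag andbT; apply/eqP => E; apply: tNa; left.
have [M HM] := tail_gt lg ag.
have fS : finite_set (s g @` `I_M) by exact/finite_image/finite_II.
move: (near_notin_finite (ladder_inj la) fS); apply: filterS => n nS tn.
case: tn => [E | [m _ E]]; first by have := ladder_not_limit la n; rewrite E.
apply: nS; exists m => //=; rewrite ltnNge; apply/negP => Mm.
have := HM (s a n) (or_intror (ex_intro2 _ _ m Mm E)).
by rewrite ltNge (ltW (ladder_lt la n)).
Qed.

Lemma compact_tail {g N} : is_limit g -> @compact X (tail s g N).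
Proof.
move=> lg F FF Ft.
have [cg | ncg] := pselect (cluster F g); first by exists g; split => //; left.
have [A [B [FA nB nAB]]] : exists A B : set X, [/\ F A, nbhs (g : X) B & ~ (A `&` B !=set0)].
  apply: contrapT => H; apply: ncg => A B FA nB; apply: contrapT => nAB.
  by apply: H; exists A, B.
move: nB; rewrite nbhsE => -[V [oV Vg] VB].
have [N0 _ HN0] := (ladder_openP V).1 oV g lg Vg.
pose S := s g @` [set n | (N <= n)%N /\ (n < N0)%N].
have fS : finite_set S.
  by apply/finite_image/(sub_finite_set _ (finite_II N0)) => n [].
have FS : F S.
  apply: filterS (filterI FA Ft) => x [Ax [E | [n Nn E]]].
    by exfalso; apply: nAB; exists x; split => //; apply: VB; rewrite E.
  have [nN0 | N0n] := ltnP n N0; first by exists n.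
  by exfalso; apply: nAB; exists x; split => //; apply: VB; rewrite E; apply: HN0.
have [p [Sp cp]] := @finite_compact X S fS F FF FS.
by exists p; split => //; case: Sp => n [Nn _] <-; right; exists n.
Qed.

End LadderTopology.

Lemma continuous_indic_clopen (R : realType) (T : topologicalType) (V : set T) :
  open V -> open (~` V) -> continuous (\1_V : T -> R).
Proof.
move=> oV oCV; apply/continuousP => A oA.
have -> : (\1_V : T -> R) @^-1` A =
    (if `[< A 1 >] then V else set0) `|` (if `[< A 0 >] then ~` V else set0).
  apply/seteqP; split=> x /=; case: (asboolP (A 1)) => h1; case: (asboolP (A 0)) => h0;
    rewrite indicE; case: (pselect (V x)) => xV; rewrite ?(mem_set xV) ?(memNset xV) /=;
    first [by left | by right | by move=> /h1 | by move=> /h0 | by case | idtac].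
by apply: openU; [case: (asboolP (A 1)) | case: (asboolP (A 0))] => _ //; exact: open0.
Qed.

Section Compactification.
Context {d : Order.disp_t} {W : orderType d} {s : W -> nat -> W}.
Hypothesis ladder_s : ladder_system s.
Local Notation X := (ladder_space s).
Local Notation K := (ladder_K s).

Lemma nbhs_NoneP (A : set K) : nbhs (None : K) A <->
  exists2 C : set X, compact C /\ closed C & Some @` (~` C) `|` [set None] `<=` A.
Proof. by []. Qed.

Lemma open_Some_setC (C : set X) : compact C -> closed C -> open (~` (Some @` C) : set K).
Proof.
move=> cC clC; rewrite openE => -[x|] nC.
  have nCx : ~ C x by move=> Cx; apply: nC; exists x.
  have : nbhs (Some x : K) (Some @` (~` C)).
    apply/one_point_compactification_some_nbhs/open_nbhs_nbhs.
    by split => //; exact: closed_openC.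
  by apply: filterS => _ [y nCy <-] [z Cz [E]]; apply: nCy; rewrite -E.
apply/nbhs_NoneP; exists C => //.
by move=> _ [[y nCy <-] [z Cz [E]] | -> [z _ //]]; apply: nCy; rewrite -E.
Qed.

Lemma continuous_indic_tail (R : realType) {g N} : is_limit g ->
  continuous (\1_(Some @` tail s g N) : K -> R).
Proof.
move=> lg; apply: continuous_indic_clopen.
  exact/one_point_compactification_open_some/open_tail.
by apply: open_Some_setC; [exact: compact_tail | exact: closed_tail].
Qed.

(* Cover [Some @` C] by the open sets [Some @` tail a 0] (for limits [a]) and
   singletons; each member of a finite subcover contains at most one limit. *)
Lemma finite_limits_of_compact {C : set X} : compact C ->
  finite_set [set a | C a /\ is_limit a].
Proof.
move=> cC.
have : compact (Some @` C : set K).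
  apply: continuous_compact => //; apply: continuous_subspaceT.
  exact: one_point_compactification_some_continuous.
rewrite compact_cover => cK.
pose U (i : K) : set K := if i is Some x then
  Some @` (if pselect (is_limit x) then tail s x 0 else [set x]) else set0.
have oU i : (Some @` C) i -> open (U i).
  case=> x _ <- /=; apply: one_point_compactification_open_some.
  by case: pselect => lx; [exact: open_tail | exact: open_nonlimit].
have cov : Some @` C `<=` \bigcup_(i in Some @` C) U i.
  move=> _ [x Cx <-]; exists (Some x); first by exists x.
  by rewrite /U; case: pselect => lx; exists x => //; left.
have [D _ cD] := cK K (Some @` C) U oU cov.
apply: sub_finite_set (finite_preimage (f := Some) (B := [set` D]) _ (finite_fset D)).
  move=> b [Cb lb]; have [[x|] Di Ub] := cD (Some b) (ex_intro2 _ _ b Cb erefl) => //.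
  move: Ub => /=; case: pselect => lx [y + [E]]; subst y.
    by case=> [-> // | [n _ E]]; have := ladder_not_limit ladder_s lx n; rewrite -E.
  by move=> ->.
by move=> x y _ _ [].
Qed.

Section ContinuousPhi.
Context {phi : K -> K} (phiP : phi_cond phi).

Let phi_Some_inv {x y} : phi (Some x) = Some y -> ~ is_limit x /\ is_limit y.
Proof.
case: phiP => nl_l _ l_None _ E.
have [lx | nx] := pselect (is_limit x); first by rewrite l_None in E.
by have [b lb] := nl_l x nx; rewrite E => -[->].
Qed.

Lemma finite_phi_preimage {C : set X} : compact C ->
  finite_set ((phi \o Some) @^-1` (Some @` C)).
Proof.
move=> cC; have fL := finite_limits_of_compact cC.
apply: sub_finite_set (finite_preimage (f := phi \o Some) (B := Some @` [set a | C a /\ is_limit a]) _ _).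
- move=> x /= [y Cy E]; exists y => //; split => //.
  by have [] := phi_Some_inv (esym E).
- move=> x y; rewrite !in_setE /= => -[x' _ Ex] [y' _ Ey] E.
  have [nx _] := phi_Some_inv (esym Ex); have [ny _] := phi_Some_inv (esym Ey).
  by case: phiP => _ inj _ _; apply: inj.
- exact: finite_image.
Qed.

Lemma phi_continuous : continuous phi.
Proof.
case: phiP => _ _ l_None None_None x O /=.
have [[a -> na] | phix] : (exists2 a, x = Some a & ~ is_limit a) \/ phi x = None.
  case: x => [a|]; last by right.
  by case: (pselect (is_limit a)) => la; [right; exact: l_None | left; exists a].
- move=> /nbhs_singleton Ophi.
  have : nbhs (Some a : K) (Some @` [set a]).
    apply/one_point_compactification_some_nbhs/open_nbhs_nbhs.
    by split; [exact: open_nonlimit | ].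
  by apply: filterS => _ [_ -> <-].
- rewrite phix => /nbhs_NoneP [C [cC clC] CO].
  have fS := finite_phi_preimage cC.
  have : nbhs x (~` (Some @` ((phi \o Some) @^-1` (Some @` C)))).
    apply: open_nbhs_nbhs; split.
      by apply: open_Some_setC; [exact: finite_compact | exact: closed_finite].
    by move=> [y /= Cy yx]; rewrite yx phix in Cy; case: Cy.
  apply: (@filterS K (nbhs x)) => -[y|] nSy; apply: CO; last by right.
  case E : (phi (Some y)) => [z|]; last by right.
  by left; exists z => // Cz; apply: nSy; exists y => //=; rewrite E; exists z.
Qed.

End ContinuousPhi.
End Compactification.

Lemma ereal_sup_max (R : realType) (S : set (\bar R)) x :
  S x -> (forall y, S y -> (y <= x)%E) -> ereal_sup S = x.
Proof.
move=> Sx H; apply/eqP; rewrite eq_le; apply/andP; split; first exact/ereal_supP.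
exact: ereal_sup_ubound.
Qed.

Lemma ereal_inf_min (R : realType) (S : set (\bar R)) x :
  S x -> (forall y, S y -> (x <= y)%E) -> ereal_inf S = x.
Proof.
move=> Sx H; apply/eqP; rewrite eq_le; apply/andP; split; last exact/ereal_infP.
exact: ereal_inf_lbound.
Qed.

Lemma continuous_borel_measurable (R : realType) (T : ptopologicalType) (h : T -> R) :
  continuous h -> measurable_fun (setT : set (borel T)) h.
Proof.
move=> /continuousP ch.
apply: (measurability _ (measurable_realfun.RGenOpens.measurableE R)).
move=> _ [_ [a [b ->]] <-]; apply: measurableI => //.
by apply: sub_sigma_algebra; apply: ch; exact: interval_open.
Qed.

Section DiracMeasures.
Context (R : realType) {d : Order.disp_t} {W : orderType d} {s : W -> nat -> W}.
Hypothesis ladder_s : ladder_system s.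
Local Notation K := (ladder_K s).
Local Notation fmeasure := {finite_measure set borel K -> \bar R}.

Lemma regular_mzero : regular_measure (mzero : fmeasure).
Proof.
move=> A mA; split.
  by apply/esym/ereal_sup_max; [exists set0; [split => //; exact: compact0|] | move=> _ [C _ <-]].
by apply/esym/ereal_inf_min; [exists setT; [split => //; exact: openT|] | move=> _ [C _ <-]].
Qed.

Lemma regular_dirac (a : W) : regular_measure (\d_(Some a : borel K) : fmeasure).
Proof.
move=> A mA; rewrite /= diracE.
have [pA | pA] := pselect (A (Some a)); [rewrite (mem_set pA) | rewrite (memNset pA)]; split.
- apply/esym/ereal_sup_max.
    exists [set (Some a : K)]; last by rewrite diracE mem_set.
    by split; [exact/finite_compact/finite_set1 | move=> _ ->].
  by move=> _ [C _ <-]; rewrite diracE; case: (_ \in _).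
- apply/esym/ereal_inf_min; first by exists setT; [split => //; exact: openT | rewrite diracE mem_set].
  by move=> _ [U [_ AU] <-]; rewrite diracE mem_set //; apply: AU.
- apply/esym/ereal_sup_max; first by exists set0; [split => //; exact: compact0 | rewrite diracE memNset].
  by move=> _ [C [_ CA] <-]; rewrite diracE memNset // => /CA.
- apply/esym/ereal_inf_min.
    exists (~` [set (Some a : K)]); last by rewrite diracE memNset // => /(_ erefl).
    split; last by move=> x Ax E; apply: pA; rewrite -E.
    rewrite -image_set1; apply: open_Some_setC.
      exact: (@finite_compact (ladder_space s) _ (finite_set1 a)).
    exact: (@closed_finite _ _ s ladder_s _ (finite_set1 a)).
  by move=> _ [U _ <-]; rewrite diracE; case: (_ \in _).
Qed.

Lemma sintegral_dirac (a : K) (h : K -> R) : measurable_fun (setT : set (borel K)) h ->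
  Defs.sintegral (\d_(a : borel K)) mzero h = h a.
Proof.
move=> mh; rewrite /Defs.sintegral /Rintegral integral_measure_zero subr0.
by rewrite integral_dirac ?diracT ?mul1e //; exact/measurable_realfun.measurable_EFinP.
Qed.

End DiracMeasures.

Lemma adjsum_dirac (R : realType) {d : Order.disp_t} {W : orderType d}
    {s : W -> nat -> W} (phi : ladder_K s -> ladder_K s) (g : ladder_K s -> R) x h :
  continuous phi -> measurable_fun (setT : set (borel (ladder_K s))) g -> continuous h ->
  adjsum_apply phi g (\d_(x : borel (ladder_K s))) mzero h = h (phi x) + g x * h x.
Proof.
move=> phi_cont g_meas h_cont; rewrite /adjsum_apply !sintegral_dirac //.
  apply: measurable_realfun.measurable_funM g_meas _.
  exact: continuous_borel_measurable.
apply: continuous_borel_measurable => y.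
exact: continuous_comp (phi_cont y) (h_cont _).
Qed.

Lemma uncountable_collision {I Y : Type} {F : set I} {D : set Y} {close : I -> Y -> Prop} :
  ~ countable F -> countable D -> (forall x, F x -> exists2 y, D y & close x y) ->
  exists x z y, [/\ F x, F z, x <> z, close x y & close z y].
Proof.
move=> nF /countable_injP [j jinj] Fclose.
have [x0 Fx0] : F !=set0.
  by apply/set0P/negP => /eqP F0; apply: nF; rewrite F0; exact: countable0.
have [y0 _ _] := Fclose x0 Fx0.
have [h Hh] : {h : I -> Y & forall x, F x -> D (h x) /\ close x (h x)}.
  apply: (@choice _ _ (fun x y => F x -> D y /\ close x y)) => x.
  have [Fx | nFx] := pselect (F x); last by exists y0.
  by have [y Dy cy] := Fclose x Fx; exists y.
apply: contrapT => noc; apply: nF; apply/countable_injP; exists (j \o h).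
move=> x z; rewrite !in_setE => Fx Fz /= jxz; apply: contrapT => xz; apply: noc.
exists x, z, (h x); split => //; first exact: (Hh x Fx).2.
have -> : h x = h z by apply: jinj; rewrite // in_setE; [exact: (Hh x Fx).1 | exact: (Hh z Fz).1].
exact: (Hh z Fz).2.
Qed.

Lemma dist_lt1_of_third {R : realType} {u v w : R} :
  `|u - w| <= 1/3 -> `|v - w| <= 1/3 -> `|u - v| < 1.
Proof. by move=> uw vw; apply: le_lt_trans (ler_distD w u v) _; rewrite (distrC w v); lra. Qed.

Definition beyond {d : Order.disp_t} {W : orderType d} (b : bool) (a u : W) : bool :=
  if b then (a < u)%O else (u < a)%O.

Lemma beyond_irr {d : Order.disp_t} {W : orderType d} b (a : W) : ~~ beyond b a a.
Proof. by case: b; rewrite /beyond ltxx. Qed.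

Lemma beyond_asym {d : Order.disp_t} {W : orderType d} {b} {a c : W} :
  beyond b a c -> ~~ beyond b c a.
Proof. by case: b => /= ac; rewrite ltNge ltW. Qed.

Section NoSeparableRange.
Context {R : realType} {d : Order.disp_t} {W : orderType d} {s : W -> nat -> W}.
Hypothesis omega1W : is_omega1 (W:=W).
Hypothesis ladder_s : ladder_system s.
Local Notation K := (ladder_K s).
Context {phi : K -> K} {G : W -> W}.
Hypothesis phi_cont : continuous phi.
Hypothesis G_limit : forall {a}, ~ is_limit a -> is_limit (G a).
Hypothesis G_inj : forall a b, ~ is_limit a -> ~ is_limit b -> G a = G b -> a = b.
Hypothesis phi_Some : forall a, ~ is_limit a -> phi (Some a) = Some (G a).

Let tail_spec a :
  {N : nat | ~ is_limit a -> forall u, tail s (G a) N u -> beyond (a < G a)%O a u}.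
Proof.
apply: cid; have [la | na] := pselect (is_limit a); first by exists 0%N.
have lG := G_limit na.
have [aG | Ga] := boolP (a < G a)%O.
  by have [N HN] := tail_gt ladder_s lG aG; exists N.
have {}Ga : (G a < a)%O.
  by rewrite lt_neqAle leNgt Ga andbT; apply/eqP => E; apply: na; rewrite -E.
by exists 0%N => _ u /(tail_le ladder_s lG) uG; exact: le_lt_trans uG Ga.
Qed.

Let U a := tail s (G a) (sval (tail_spec a)).
Let f a : K -> R := \1_(Some @` U a).

Let U_beyond {a u} : ~ is_limit a -> U a u -> beyond (a < G a)%O a u.
Proof. by move=> na; exact: (svalP (tail_spec a) na). Qed.

Let f_continuous {a} : ~ is_limit a -> continuous (f a).
Proof. by move=> na; exact: (continuous_indic_tail ladder_s R (G_limit na)). Qed.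

Let f_le1 a : sup_le1 (f a).
Proof. by move=> x; rewrite /f indicE; case: (_ \in _); rewrite ?normr0 ?normr1. Qed.

Let f_phi a c : ~ is_limit a -> ~ is_limit c -> f c (phi (Some a)) = (a == c)%:R.
Proof.
move=> na nc; rewrite /f indicE phi_Some //; have [-> | ac] := eqVneq a c.
  by rewrite mem_set //; exists (G c) => //; left.
rewrite memNset // => -[y Uy [yGa]]; move: Uy; rewrite yGa => -[E | [n _ E]].
  by move/eqP: ac; apply; apply: G_inj.
by have := ladder_not_limit ladder_s (G_limit nc) n; rewrite -E => /(_ (G_limit na)).
Qed.

Let f_Some a c : f c (Some a) != 0 -> U c a.
Proof.
rewrite /f indicE; have [[y Uy [<-]] // | nU] := pselect ((Some @` U c) (Some a)).
by rewrite memNset // eqxx.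
Qed.

Section Pairing.
Context {g : K -> R}.
Hypothesis g_meas : measurable_fun (setT : set (borel K)) g.

Let pairing x y := adjsum_apply phi g (\d_(Some x : borel K)) mzero (f y).

Let pairingE x y : ~ is_limit y ->
  pairing x y = f y (phi (Some x)) + g (Some x) * f y (Some x).
Proof. by move=> ny; apply: adjsum_dirac => //; exact: f_continuous. Qed.

Let pairing_diag a : ~ is_limit a -> pairing a a = 1.
Proof.
move=> na; rewrite pairingE // f_phi // eqxx.
have -> : f a (Some a) = 0.
  by apply/eqP; apply: contraT => /f_Some /(U_beyond na); rewrite (negbTE (beyond_irr _ _)).
by rewrite mulr0 addr0.
Qed.

Let pairing_offdiag {a c} : ~ is_limit a -> ~ is_limit c -> (a < G a)%O = (c < G c)%O ->
  a <> c -> pairing c a = 0 \/ pairing a c = 0.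
Proof.
move=> na nc same_side ac; rewrite !pairingE // !f_phi //.
have /negbTE -> : c != a by apply/eqP => E; apply: ac.
have /negbTE -> : a != c by apply/eqP.
rewrite !add0r; have [fa | /f_Some /(U_beyond na) bac] := eqVneq (f a (Some c)) 0.
  by left; rewrite fa mulr0.
have [fc | /f_Some /(U_beyond nc) bca] := eqVneq (f c (Some a)) 0.
  by right; rewrite fc mulr0.
by move: bca; rewrite -same_side; move/negP: (beyond_asym bac).
Qed.

Let side b := [set a | ~ is_limit a /\ (a < G a)%O = b].

Let side_uncountable : exists b, ~ countable (side b).
Proof.
apply: contrapT => /forallNP cside; apply: (nonlimit_uncountable omega1W).
apply: sub_countable (countable_setU (contrapT (cside true)) (contrapT (cside false))).
by apply: subset_card_le => a na; case E : (a < G a)%O; [left | right].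
Qed.

Let row_gap {b a c} : side b a -> side b c -> a <> c ->
  exists2 k, ~ is_limit k & 1 <= `|pairing a k - pairing c k|.
Proof.
move=> [na <-] [nc sc] ac; case: (pairing_offdiag na nc (esym sc) ac) => [pca | pac].
  by exists a => //; rewrite pairing_diag // pca subr0 normr1.
by exists c => //; rewrite pairing_diag // pac sub0r normrN normr1.
Qed.

Let col_gap {b a c} : side b a -> side b c -> a <> c ->
  exists2 k, ~ is_limit k & 1 <= `|pairing k a - pairing k c|.
Proof.
move=> [na <-] [nc sc] ac; case: (pairing_offdiag na nc (esym sc) ac) => [pca | pac].
  by exists c => //; rewrite pairing_diag // pca sub0r normrN normr1.
by exists a => //; rewrite pairing_diag // pac subr0 normr1.
Qed.

Lemma not_cond_b : ~ cond_b phi g.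
Proof.
move=> [D [cD _ Ddense]]; have [b nside] := side_uncountable.
have close x : side b x -> exists2 Psi, D Psi &
    dual_dist_le (adjsum_apply phi g (\d_(Some x : borel K)) mzero) Psi (1/3).
  move=> _; apply: Ddense; last lra.
  by exists (\d_(Some x : borel K)), mzero; split; [exact: regular_dirac | exact: regular_mzero |].
have [a [c [Psi [sa sc ac closea closec]]]] := uncountable_collision nside cD close.
have [k nk] := row_gap sa sc ac.
apply/negP; rewrite -ltNge.
exact: dist_lt1_of_third (closea _ (f_continuous nk) (f_le1 k)) (closec _ (f_continuous nk) (f_le1 k)).
Qed.

Lemma not_cond_c : ~ cond_c phi g.
Proof.
move=> [D [cD _ Ddense]]; have [b nside] := side_uncountable.
have close x : side b x -> exists2 f', D f' & bidual_dist_le phi g (f x) f' (1/3).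
  by move=> [nx _]; apply: Ddense; [exact: f_continuous | lra].
have [a [c [f' [sa sc ac closea closec]]]] := uncountable_collision nside cD close.
have [k nk] := col_gap sa sc ac.
have dirac_le1 (h : K -> R) : continuous h -> sup_le1 h ->
    `|Defs.sintegral (\d_(Some k : borel K)) mzero h| <= 1.
  by move=> hc h1; rewrite sintegral_dirac //; exact: continuous_borel_measurable.
have close_k f1 f2 : bidual_dist_le phi g f1 f2 (1/3) ->
    `|adjsum_apply phi g (\d_(Some k : borel K)) mzero f1 -
      adjsum_apply phi g (\d_(Some k : borel K)) mzero f2| <= 1/3.
  by apply; [exact: regular_dirac | exact: regular_mzero | exact: dirac_le1].
apply/negP; rewrite -ltNge.
exact: dist_lt1_of_third (close_k _ _ closea) (close_k _ _ closec).
Qed.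

End Pairing.
End NoSeparableRange.

Lemma phi_cond_factor {d : Order.disp_t} {W : orderType d} {s : W -> nat -> W}
    {phi : ladder_K s -> ladder_K s} : phi_cond phi ->
  exists G : W -> W, [/\ forall a, ~ is_limit a -> is_limit (G a),
    forall a b, ~ is_limit a -> ~ is_limit b -> G a = G b -> a = b &
    forall a, ~ is_limit a -> phi (Some a) = Some (G a)].
Proof.
case=> nl_limit nl_inj _ _.
have [G HG] : {G : W -> W & forall a, ~ is_limit a -> is_limit (G a) /\ phi (Some a) = Some (G a)}.
  apply: (@choice _ _ (fun a b => ~ is_limit a -> is_limit b /\ phi (Some a) = Some b)) => a.
  have [la | na] := pselect (is_limit a); first by exists a.
  by have [b lb E] := nl_limit a na; exists b.
exists G; split=> [a /HG [] // | a b na nb E | a /HG []//].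
by apply: nl_inj => //; rewrite (HG a na).2 (HG b nb).2 E.
Qed.

Lemma exists_phi_cond {d : Order.disp_t} {W : orderType d} (s : W -> nat -> W) :
  is_omega1 (W:=W) -> exists phi : ladder_K s -> ladder_K s, phi_cond phi.
Proof.
move=> /exists_inj_limit [e [le einj]].
exists (fun x => if x is Some a then if `[< is_limit a >] then None else Some (e a) else None).
split=> //.
- by move=> a na; exists (e a) => //=; rewrite asboolF.
- by move=> a b na nb /=; rewrite !asboolF // => -[/einj].
- by move=> a la /=; rewrite asboolT.
Qed.

Theorem theorem6 (R : realType) (d : Order.disp_t) (W : orderType d)
  (s : W -> nat -> W) :
  @is_omega1 d W -> ladder_system s ->
  (forall phi : ladder_K s -> ladder_K s, phi_cond phi ->
     [/\ continuous phi,
         ~ (exists g : ladder_K s -> R, bounded_borel g /\ cond_b phi g) &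
         ~ (exists g : ladder_K s -> R, bounded_borel g /\ cond_c phi g)])
  /\ (exists phi : ladder_K s -> ladder_K s, phi_cond phi).
Proof.
move=> omega1W ladder_s; split; last exact: exists_phi_cond.
move=> phi phiP; have phi_cont := phi_continuous ladder_s phiP.
have [G [G_limit G_inj phi_Some]] := phi_cond_factor phiP.
split=> // -[g [[g_meas _]]].
- exact: (not_cond_b omega1W ladder_s phi_cont G_limit G_inj phi_Some g_meas).
- exact: (not_cond_c omega1W ladder_s phi_cont G_limit G_inj phi_Some g_meas).
Qed.
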